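(* Let $\mathcal{D}$ be a collection of random variables on $\Omega$ containing all constants, with coherent$_1$ marginal previsions $P(\cdot)$. Let $\mathcal{L}$ be the linear span of all functions of the form $XB$ with $X\in\mathcal{D}$ and $B$ a nonempty event. Then there exists a coherent$_1$ conditional prevision $P(\cdot\mid\cdot)$ on the set $\{(X,B):X\in\mathcal{L},\ B\ne\emptyset\}$, with $P(X\mid\Omega)=P(X)$ for $X\in\mathcal{D}$, such that for each nonempty event $B$, $P(\cdot\mid B)$ is a finitely additive expectation on $\mathcal{L}$ with $P(XB\mid B)=P(X\mid B)$ for all $X\in\mathcal{L}$; that is, $P(\cdot\mid\cdot)$ is a finitely additive conditional expectation.
   Context: Random variables are real-valued functions on a nonempty set $\Omega$; events are subsets, identified with indicator functions; $XB$ is the pointwise product. Previsions are extended real numbers; $P(X)=P(X\mid\Omega)$. Coherence$_1$: a collection $\{P(X_i\mid B_i):i\in I\}$ (with nonempty $B_i$) is coherent$_1$ if for every finite $\{i_1,\dots,i_n\}\subseteq I$, all real $\alpha_1,\dots,\alpha_n$ with $\alpha_j\ge 0$ whenever $P(X_{i_j}\mid B_{i_j})=+\infty$ and $\alpha_j\le 0$ whenever $P(X_{i_j}\mid B_{i_j})=-\infty$, and all real $c_j$ with $c_j=P(X_{i_j}\mid B_{i_j})$ whenever finite, $\sup_\omega \sum_{j=1}^n \alpha_j B_{i_j}(\omega)[X_{i_j}(\omega)-c_j]\ge 0$. A finitely additive expectation on a linear space $\mathcal{L}$ containing constants is a map $L:\mathcal{L}\to\mathbb{R}\cup\{\pm\infty\}$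 that is nonnegative ($X\le Y$ implies $L(X)\le L(Y)$), extended-linear ($L(\alpha X+\beta Y)=\alpha L(X)+\beta L(Y)$ for real $\alpha,\beta$ whenever the right side is not $\infty-\infty$, with $0\times(\pm\infty)=0$), and has $L(1)=1$. Finitely additive conditional expectation: given a linear space $\mathcal{L}$, a collection $\mathcal{B}$ of nonempty events including $\Omega$ with $XB\in\mathcal{L}$ for $X\in\mathcal{L}$, $B\in\mathcal{B}$, a map $L(\cdot\mid\cdot):\mathcal{L}\times\mathcal{B}\to\mathbb{R}\cup\{\pm\infty\}$ is a finitely additive conditional expectation if for each $B\in\mathcal{B}$, $L(\cdot\mid B)$ is a finitely additive expectation on $\mathcal{L}$ with $L(XB\mid B)=L(X\mid B)$, and $\{L(X\mid B)\}$ is a coherent$_1$ conditional prevision. *)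

From Stdlib Require Import Reals List ClassicalEpsilon.
From Coquelicot Require Import Coquelicot.
Open Scope R_scope.

(* events are subsets of Omega, identified with their indicator functions *)
Definition indic {Omega : Type} (B : Omega -> Prop) (w : Omega) : R :=
  if excluded_middle_informative (B w) then 1 else 0.

Definition nonempty {Omega : Type} (B : Omega -> Prop) : Prop := exists w, B w.

Definition fullset {Omega : Type} : Omega -> Prop := fun _ => True.

Definition supf {Omega : Type} (f : Omega -> R) : Rbar :=
  Lub_Rbar (fun y => exists w, y = f w).

(* Coherence_1 of a collection {p i = P(X i | B i) : idx i}.  A finite
   subfamily {i_1,...,i_n} together with the alpha_j and c_j is encoded as a
   list of triples (i_j, alpha_j, c_j) with pairwise distinct indices. *)
Definition admissible {I : Type} (idx : I -> Prop) (p : I -> Rbar)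
    (s : list (I * R * R)) : Prop :=
  NoDup (map (fun t => fst (fst t)) s) /\
  List.Forall (fun t : I * R * R =>
            idx (fst (fst t)) /\
            (p (fst (fst t)) = p_infty -> 0 <= snd (fst t)) /\
            (p (fst (fst t)) = m_infty -> snd (fst t) <= 0) /\
            (forall r : R, p (fst (fst t)) = Finite r -> snd t = r)) s.

Definition gain {Omega I : Type} (X : I -> Omega -> R) (B : I -> Omega -> Prop)
    (s : list (I * R * R)) (w : Omega) : R :=
  fold_right (fun t acc => let '(i, a, c) := t in
                a * indic (B i) w * (X i w - c) + acc) 0 s.

Definition coherent1 {Omega I : Type} (idx : I -> Prop) (X : I -> Omega -> R)
    (B : I -> Omega -> Prop) (p : I -> Rbar) : Prop :=
  (forall i, idx i -> nonempty (B i)) /\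
  forall s, admissible idx p s -> Rbar_le (Finite 0) (supf (gain X B s)).

Definition spanL {Omega : Type} (D : (Omega -> R) -> Prop) (f : Omega -> R) : Prop :=
  exists s : list (R * (Omega -> R) * (Omega -> Prop)),
    List.Forall (fun t : R * (Omega -> R) * (Omega -> Prop) =>
              D (snd (fst t)) /\ nonempty (snd t)) s /\
    forall w, f w = fold_right (fun t acc => let '(a, X, B) := t in
                                  a * X w * indic B w + acc) 0 s.

(* finitely additive expectation on a linear space L (0 * (+-oo) = 0 is
   Coquelicot's Rbar_mult convention; Rbar_plus' = None exactly for oo - oo) *)
Definition fa_expectation {Omega : Type} (L : (Omega -> R) -> Prop)
    (E : (Omega -> R) -> Rbar) : Prop :=
  (forall X Y, L X -> L Y -> (forall w, X w <= Y w) -> Rbar_le (E X) (E Y)) /\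
  (forall X Y (a b : R) z, L X -> L Y ->
     Rbar_plus' (Rbar_mult (Finite a) (E X)) (Rbar_mult (Finite b) (E Y)) = Some z ->
     E (fun w => a * X w + b * Y w) = z) /\
  E (fun _ => 1) = Finite 1.

From Stdlib Require Import Reals List ClassicalEpsilon Lra Psatz.
From Coquelicot Require Import Coquelicot.
From mathcomp Require filter.
Open Scope R_scope.

(* For finitely many X in D, coherence of P and a separating-hyperplane argument in
   the finite-dimensional space of their expectations give a finitely supported
   probability mu with E_mu[X] within δ of P(X) (beyond 1/δ where P(X) is
   infinite).  These requirements generate a proper filter on simple
   probabilities; along an ultrafilter U refining it, P(X | B) is the ultralimit of
   E_mu[X 1_B] / mu(B).  For each mu this elementary conditional expectation is a
   fair price: every bet against it has zero mu-expected gain, hence gains at some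
   point.  Coherence, linearity and monotonicity survive the ultralimit. *)

Definition ultra {T : Type} (U : (T -> Prop) -> Prop) : Prop :=
  forall S, U S \/ U (fun x => ~ S x).

Lemma ultrafilter_extension {T : Type} (F : (T -> Prop) -> Prop) :
  Filter F -> ~ F (fun _ => False) ->
  exists U, (forall S, F S -> U S) /\ ProperFilter U /\ ultra U.
Proof.
intros FF HF.
assert (PF : @filter.ProperFilter T F).
{ constructor; [exact HF|].
  constructor; [exact filter_true|exact filter_and|exact filter_imp]. }
destruct (filter.ultraFilterLemma PF) as [U [UU sub]].
assert (PU : @filter.ProperFilter T U) by apply filter.ultra_proper.
exists U. split; [exact sub|split].
- constructor.
  + intros S HS. apply NNPP. intros Hne. apply (filter.filter_not_empty U).
    eapply filter.filterS; [|exact HS]. intros x Sx. apply Hne. exists x; exact Sx.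
  + constructor; [exact filter.filterT|exact (fun A B => @filter.filterI _ _ _ A B)
                 |exact (fun A B => @filter.filterS _ _ _ A B)].
- intros S. exact (filter.in_ultra_setVsetC S UU).
Qed.

Definition ulim {T : Type} (U : (T -> Prop) -> Prop) (x : T -> R) : Rbar :=
  Lub_Rbar (fun t => U (fun i => t <= x i)).

Section Ultralimit.

Context {T : Type} (U : (T -> Prop) -> Prop).
Hypothesis FU : ProperFilter U.
Hypothesis UU : ultra U.

Lemma ulim_gt (x : T -> R) (t : R) : Rbar_lt t (ulim U x) -> U (fun i => t < x i).
Proof.
intros Ht. destruct (Lub_Rbar_correct (fun t => U (fun i => t <= x i))) as [_ lub].
destruct (classic (exists t', t < t' /\ U (fun i => t' <= x i))) as [[t' [Htt' Hev]]|Hno].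
- eapply filter_imp; [|exact Hev]. intros i Hi; lra.
- exfalso. assert (Hle : Rbar_le (ulim U x) t).
  { apply lub. intros y Hy. simpl. apply Rnot_lt_le. intros Hty. apply Hno. exists y; auto. }
  exact (Rbar_lt_not_le _ _ Ht Hle).
Qed.

Lemma ulim_lt (x : T -> R) (t : R) : Rbar_lt (ulim U x) t -> U (fun i => x i < t).
Proof.
intros Ht. destruct (Lub_Rbar_correct (fun t => U (fun i => t <= x i))) as [ub _].
destruct (UU (fun i => t <= x i)) as [Hev|Hev].
- exfalso. exact (Rbar_lt_not_le _ _ Ht (ub t Hev)).
- eapply filter_imp; [|exact Hev]. intros i Hi. lra.
Qed.

Lemma filterlim_ulim (x : T -> R) : filterlim x U (Rbar_locally (ulim U x)).
Proof.
intros Q HQ. unfold filtermap.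
destruct (ulim U x) as [r| |] eqn:Ex; simpl in HQ.
- destruct HQ as [eps Heps].
  assert (Hlo : U (fun i => r - eps < x i)).
  { apply ulim_gt. rewrite Ex. simpl. destruct eps; simpl; lra. }
  assert (Hhi : U (fun i => x i < r + eps)).
  { apply ulim_lt. rewrite Ex. simpl. destruct eps; simpl; lra. }
  eapply filter_imp; [|exact (filter_and _ _ Hlo Hhi)].
  intros i [H1 H2]. apply Heps. change (Rabs (x i - r) < eps). apply Rabs_def1; lra.
- destruct HQ as [M HM]. eapply filter_imp; [intros i Hi; exact (HM _ Hi)|].
  apply ulim_gt. rewrite Ex. exact I.
- destruct HQ as [M HM]. eapply filter_imp; [intros i Hi; exact (HM _ Hi)|].
  apply ulim_lt. rewrite Ex. exact I.
Qed.

Lemma ulim_unique (x : T -> R) (L : Rbar) : filterlim x U (Rbar_locally L) -> ulim U x = L.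
Proof.
intros HL. assert (Hx := filterlim_ulim x). assert (Hxx : U (fun i => x i <= x i)).
{ apply filter_forall. intros i. apply Rle_refl. }
apply Rbar_le_antisym;
  [exact (filterlim_le x x _ _ Hxx Hx HL)|exact (filterlim_le x x _ _ Hxx HL Hx)].
Qed.

Lemma ulim_le (x y : T -> R) : U (fun i => x i <= y i) -> Rbar_le (ulim U x) (ulim U y).
Proof. intros Hxy. exact (filterlim_le _ _ _ _ Hxy (filterlim_ulim x) (filterlim_ulim y)). Qed.

Lemma ulim_eq (x y : T -> R) : U (fun i => x i = y i) -> ulim U x = ulim U y.
Proof.
intros Hxy. symmetry. apply ulim_unique. exact (filterlim_ext_loc _ _ Hxy (filterlim_ulim x)).
Qed.

Lemma ulim_const (c : R) : ulim U (fun _ => c) = c.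
Proof. apply ulim_unique, filterlim_const. Qed.

Lemma filterlim_ulim_bounded (x : T -> R) (a b : R) :
  U (fun i => a <= x i <= b) -> filterlim x U (Rbar_locally (real (ulim U x))).
Proof.
intros Hab.
assert (Ha := ulim_le (fun _ => a) x (filter_imp _ _ (fun i H => proj1 H) Hab)).
assert (Hb := ulim_le x (fun _ => b) (filter_imp _ _ (fun i H => proj2 H) Hab)).
rewrite ulim_const in Ha, Hb. assert (Hx := filterlim_ulim x).
destruct (ulim U x); simpl in *; [exact Hx|contradiction..].
Qed.

End Ultralimit.

Lemma filterlim_Rbar_plus_fun {T} (F : (T -> Prop) -> Prop) {FF : Filter F}
    (x y : T -> R) (Lx Ly z : Rbar) :
  filterlim x F (Rbar_locally Lx) -> filterlim y F (Rbar_locally Ly) ->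
  Rbar_plus' Lx Ly = Some z -> filterlim (fun i => x i + y i) F (Rbar_locally z).
Proof.
intros Hx Hy Hz. apply (filterlim_comp_2 x y Rplus Hx Hy). exact (filterlim_Rbar_plus _ _ _ Hz).
Qed.

Lemma filterlim_Rbar_scal_fun {T} (F : (T -> Prop) -> Prop) {FF : Filter F}
    (x : T -> R) (a : R) (L : Rbar) :
  filterlim x F (Rbar_locally L) -> filterlim (fun i => a * x i) F (Rbar_locally (Rbar_mult a L)).
Proof. intros Hx. eapply filterlim_comp; [exact Hx|apply filterlim_Rbar_mult_l]. Qed.

Lemma filterlim_Rbar_mult_fun {T} (F : (T -> Prop) -> Prop) {FF : Filter F}
    (x y : T -> R) (a b : R) :
  filterlim x F (Rbar_locally a) -> filterlim y F (Rbar_locally b) ->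
  filterlim (fun i => x i * y i) F (Rbar_locally (a * b)).
Proof.
intros Hx Hy. apply (filterlim_comp_2 x y Rmult Hx Hy).
exact (filterlim_Rbar_mult a b (a * b) eq_refl).
Qed.

Definition lsum {A : Type} (l : list A) (f : A -> R) : R :=
  fold_right (fun a acc => f a + acc) 0 l.

Lemma lsum_ext {A} (l : list A) f g : (forall a, In a l -> f a = g a) -> lsum l f = lsum l g.
Proof.
induction l as [|a l IH]; intros H; simpl; [reflexivity|].
rewrite (H a (or_introl eq_refl)), IH; [reflexivity|intros; apply H; right; assumption].
Qed.

Lemma lsum_plus {A} (l : list A) f g : lsum l (fun a => f a + g a) = lsum l f + lsum l g.
Proof. induction l as [|a l IH]; simpl; [ring|rewrite IH; ring]. Qed.

Lemma lsum_scal {A} (l : list A) c f : lsum l (fun a => c * f a) = c * lsum l f.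
Proof. induction l as [|a l IH]; simpl; [ring|rewrite IH; ring]. Qed.

Lemma lsum_const {A} (l : list A) c : lsum l (fun _ => c) = c * INR (length l).
Proof.
induction l as [|a l IH]; simpl length; [simpl; ring|].
rewrite S_INR. simpl. rewrite IH. ring.
Qed.

Lemma lsum_le {A} (l : list A) f g : (forall a, In a l -> f a <= g a) -> lsum l f <= lsum l g.
Proof.
induction l as [|a l IH]; intros H; simpl; [lra|].
apply Rplus_le_compat; [apply H; left; reflexivity|apply IH; intros; apply H; right; assumption].
Qed.

Lemma lsum_nonneg {A} (l : list A) f : (forall a, In a l -> 0 <= f a) -> 0 <= lsum l f.
Proof.
intros H. replace 0 with (lsum l (fun _ => 0)) by (rewrite lsum_const; ring).
apply lsum_le. exact H.
Qed.

Lemma lsum_term_le {A} (l : list A) f a :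
  In a l -> (forall b, In b l -> 0 <= f b) -> f a <= lsum l f.
Proof.
induction l as [|b l IH]; intros Ha H; simpl; [destruct Ha|].
assert (Hb : 0 <= f b) by (apply H; left; reflexivity).
assert (Hl : 0 <= lsum l f) by (apply lsum_nonneg; intros; apply H; right; assumption).
destruct Ha as [<-|Ha]; [lra|].
assert (f a <= lsum l f) by (apply IH; [assumption|intros; apply H; right; assumption]). lra.
Qed.

Lemma lsum_delta {A} (l : list A) f a0 : NoDup l -> In a0 l ->
  lsum l (fun a => if excluded_middle_informative (a = a0) then f a else 0) = f a0.
Proof.
induction l as [|a l IH]; intros Hnd Ha0; simpl; [destruct Ha0|].
inversion Hnd as [|? ? Hal Hnd']; subst.
destruct (excluded_middle_informative (a = a0)) as [<-|Hne].
- rewrite (lsum_ext l _ (fun _ => 0)), lsum_const; [ring|].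
  intros b Hb. destruct (excluded_middle_informative (b = a)) as [->|]; [contradiction|reflexivity].
- destruct Ha0 as [->|Ha0]; [contradiction|]. rewrite IH by assumption. ring.
Qed.

Lemma filterlim_lsum {T A} (F : (T -> Prop) -> Prop) {FF : Filter F}
    (l : list A) (f : T -> A -> R) (g : A -> R) :
  (forall a, In a l -> filterlim (fun i => f i a) F (Rbar_locally (g a))) ->
  filterlim (fun i => lsum l (f i)) F (Rbar_locally (lsum l g)).
Proof.
induction l as [|a l IH]; intros H; simpl.
- apply filterlim_const.
- apply (filterlim_Rbar_plus_fun F _ _ (g a) (lsum l g)); [| |reflexivity].
  + apply H; left; reflexivity.
  + apply IH; intros; apply H; right; assumption.
Qed.

Lemma filter_forall_list {T A} (F : (T -> Prop) -> Prop) {FF : Filter F}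
    (l : list A) (Q : A -> T -> Prop) :
  (forall a, In a l -> F (Q a)) -> F (fun i => forall a, In a l -> Q a i).
Proof.
induction l as [|a l IH]; intros H.
- apply filter_forall. intros i b [].
- assert (Hl := IH (fun b Hb => H b (or_intror Hb))).
  eapply filter_imp; [|exact (filter_and _ _ (H a (or_introl eq_refl)) Hl)].
  intros i [Ha Hi] b [<-|Hb]; [exact Ha|exact (Hi b Hb)].
Qed.

Lemma indic_01 {Omega} (B : Omega -> Prop) w : indic B w = 0 \/ indic B w = 1.
Proof. unfold indic; destruct (excluded_middle_informative (B w)); auto. Qed.

Lemma indic_nonneg {Omega} (B : Omega -> Prop) w : 0 <= indic B w.
Proof. destruct (indic_01 B w) as [-> | ->]; lra. Qed.

Lemma indic_in {Omega} (B : Omega -> Prop) w : B w -> indic B w = 1.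
Proof. intros Hw. unfold indic. destruct (excluded_middle_informative (B w)); tauto. Qed.

Lemma indic_fullset {Omega} (w : Omega) : indic fullset w = 1.
Proof. apply indic_in. exact I. Qed.

(* Finitely supported probabilities are lists of (weight, point) pairs. *)
Definition expect {Omega} (mu : list (R * Omega)) (f : Omega -> R) : R :=
  fold_right (fun t acc => fst t * f (snd t) + acc) 0 mu.

Definition is_prob {Omega} (mu : list (R * Omega)) : Prop :=
  List.Forall (fun t => 0 <= fst t) mu /\ expect mu (fun _ => 1) = 1.

Definition dirac {Omega} (w : Omega) : list (R * Omega) := (1, w) :: nil.

Definition mix {Omega} (t : R) (mu nu : list (R * Omega)) : list (R * Omega) :=
  map (fun u => ((1 - t) * fst u, snd u)) mu ++ map (fun u => (t * fst u, snd u)) nu.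

Section SimpleProbability.

Context {Omega : Type}.
Implicit Types (mu nu : list (R * Omega)) (f g : Omega -> R) (w : Omega).

Lemma expect_ext mu f g : (forall w, f w = g w) -> expect mu f = expect mu g.
Proof. intros H; induction mu as [|t mu IH]; simpl; [reflexivity|rewrite H, IH; reflexivity]. Qed.

Lemma expect_lin mu a b f g :
  expect mu (fun w => a * f w + b * g w) = a * expect mu f + b * expect mu g.
Proof. induction mu as [|t mu IH]; simpl; [ring|rewrite IH; ring]. Qed.

Lemma expect_const mu c : expect mu (fun _ => c) = c * expect mu (fun _ => 1).
Proof. induction mu as [|t mu IH]; simpl; [ring|rewrite IH; ring]. Qed.

Lemma expect_le mu f g : List.Forall (fun t => 0 <= fst t) mu ->
  (forall w, f w <= g w) -> expect mu f <= expect mu g.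
Proof.
intros Hmu H; induction Hmu as [|t mu Ht Hmu IH]; simpl; [lra|].
assert (fst t * f (snd t) <= fst t * g (snd t)) by (apply Rmult_le_compat_l; auto). lra.
Qed.

Lemma expect_nonneg mu f : List.Forall (fun t => 0 <= fst t) mu -> (forall w, 0 <= f w) ->
  0 <= expect mu f.
Proof.
intros Hmu Hf. rewrite <- (Rmult_0_l (expect mu (fun _ => 1))), <- expect_const.
apply expect_le; assumption.
Qed.

Lemma expect_lsum {A} mu (l : list A) (h : A -> Omega -> R) :
  expect mu (fun w => lsum l (fun a => h a w)) = lsum l (fun a => expect mu (h a)).
Proof.
induction l as [|a l IH]; simpl.
- rewrite expect_const. ring.
- rewrite (expect_ext mu _ (fun w => 1 * h a w + 1 * lsum l (fun b => h b w))) by (intros; ring).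
  rewrite expect_lin, IH. ring.
Qed.

Lemma expect_dirac w f : expect (dirac w) f = f w.
Proof. simpl. ring. Qed.

Lemma is_prob_dirac w : is_prob (dirac w).
Proof. split; [repeat constructor; simpl; lra|apply expect_dirac]. Qed.

Lemma expect_mix t mu nu f : expect (mix t mu nu) f = (1 - t) * expect mu f + t * expect nu f.
Proof.
unfold mix. induction mu as [|u mu IH]; simpl.
- induction nu as [|v nu IHnu]; simpl; [ring|rewrite IHnu; ring].
- rewrite IH. ring.
Qed.

Lemma is_prob_mix t mu nu : 0 <= t <= 1 -> is_prob mu -> is_prob nu -> is_prob (mix t mu nu).
Proof.
intros Ht [Hmu Emu] [Hnu Enu]. split.
- apply Forall_app; split; apply Forall_map; eapply Forall_impl; try eassumption;
    intros u Hu; simpl; apply Rmult_le_pos; lra.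
- rewrite expect_mix, Emu, Enu. ring.
Qed.

Lemma expect_neg mu g : List.Forall (fun t => 0 <= fst t) mu -> (forall w, g w < 0) ->
  0 < expect mu (fun _ => 1) -> expect mu g < 0.
Proof.
intros Hmu Hg; induction Hmu as [|t mu Ht Hmu IH]; simpl; [lra|]. intros Hpos.
assert (Hle : expect mu g <= 0).
{ rewrite <- (Rmult_0_l (expect mu (fun _ => 1))), <- expect_const.
  apply expect_le; [exact Hmu|]. intros w; apply Rlt_le, Hg. }
destruct (Rle_lt_or_eq_dec _ _ Ht) as [Hpt|Ht0].
- assert (fst t * g (snd t) < 0) by (apply Rmult_pos_neg; auto). lra.
- rewrite <- Ht0 in *. assert (expect mu g < 0) by (apply IH; lra). lra.
Qed.

Lemma expect_nonneg_witness mu g : is_prob mu -> 0 <= expect mu g -> exists w, 0 <= g w.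
Proof.
intros [Hmu E1] Hg. apply NNPP. intros Hno.
assert (Hneg : expect mu g < 0).
{ apply expect_neg; [exact Hmu| |lra]. intros w. apply Rnot_le_lt. intros Hw. apply Hno. eauto. }
lra.
Qed.

Lemma expect_null_event mu (B : Omega -> Prop) f : List.Forall (fun t => 0 <= fst t) mu ->
  expect mu (indic B) = 0 -> expect mu (fun w => f w * indic B w) = 0.
Proof.
intros Hmu; induction Hmu as [|t mu Ht Hmu IH]; simpl; intros HB; [reflexivity|].
assert (H1 : 0 <= fst t * indic B (snd t)) by (apply Rmult_le_pos; [assumption|apply indic_nonneg]).
assert (H2 : 0 <= expect mu (indic B)) by (apply expect_nonneg; [exact Hmu|apply indic_nonneg]).
assert (Ht0 : fst t * indic B (snd t) = 0) by lra.
rewrite IH by lra.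
transitivity (f (snd t) * (fst t * indic B (snd t))); [ring|]. rewrite Ht0. ring.
Qed.

End SimpleProbability.

Lemma glb_approx (E : R -> Prop) (lb : R) : (exists x, E x) -> (forall x, E x -> lb <= x) ->
  exists m, lb <= m /\ (forall x, E x -> m <= x) /\
            (forall d, 0 < d -> exists x, E x /\ x < m + d).
Proof.
intros [x0 Hx0] Hlb. destruct (Glb_Rbar_correct E) as [Hlow Hgreat].
assert (H1 : Rbar_le lb (Glb_Rbar E)) by (apply Hgreat; intros x Hx; exact (Hlb x Hx)).
assert (H2 := Hlow x0 Hx0).
destruct (Glb_Rbar E) as [m| |]; simpl in H1, H2; try contradiction.
exists m. split; [exact H1|split; [exact Hlow|]].
intros d Hd. apply NNPP. intros Hno.
assert (H3 : Rbar_le (m + d) m).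
{ apply Hgreat. intros x Hx. simpl. apply Rnot_lt_le. intros Hxd. apply Hno. eauto. }
simpl in H3. lra.
Qed.

Lemma almost_minimizing_ultrafilter {A} (S : A -> Prop) (f : A -> R) (lb : R) :
  (exists a, S a) -> (forall a, S a -> lb <= f a) ->
  exists d V, lb <= d /\ (forall a, S a -> d <= f a) /\ ProperFilter V /\ ultra V /\
    forall δ, 0 < δ -> V (fun a => S a /\ f a < d + δ).
Proof.
intros [a0 Ha0] Hlb.
destruct (glb_approx (fun r => exists a, S a /\ r = f a) lb) as [d [Hd [Hlow Hnear]]].
{ exists (f a0), a0. auto. }
{ intros r [a [Ha ->]]. auto. }
set (F0 := fun Q : A -> Prop => exists δ, 0 < δ /\ forall a, S a -> f a < d + δ -> Q a).
assert (FF0 : Filter F0).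
{ constructor.
  - exists 1. split; [lra|auto].
  - intros Q1 Q2 [δ1 [H1 HQ1]] [δ2 [H2 HQ2]]. exists (Rmin δ1 δ2).
    split; [apply Rmin_glb_lt; assumption|]. intros a Ha Hfa.
    pose proof (Rmin_l δ1 δ2). pose proof (Rmin_r δ1 δ2).
    split; [apply HQ1|apply HQ2]; auto; lra.
  - intros Q1 Q2 H12 [δ [Hδ HQ1]]. exists δ. auto. }
assert (NF0 : ~ F0 (fun _ => False)).
{ intros [δ [Hδ H]]. destruct (Hnear δ Hδ) as [r [[a [Ha ->]] Hr]]. exact (H a Ha Hr). }
destruct (ultrafilter_extension F0 FF0 NF0) as [V [HV [FV UV]]].
exists d, V. split; [exact Hd|]. split; [intros a Ha; apply Hlow; eauto|].
split; [exact FV|]. split; [exact UV|].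
intros δ Hδ. apply HV. exists δ. auto.
Qed.

(* Where P X = +oo (resp. -oo) the target v may lie below (resp. above) the
   expectation e: a supporting bet then has the sign that coherence allows. *)
Definition compatible {Omega} (P : (Omega -> R) -> Rbar) (X : Omega -> R) (v e : R) : Prop :=
  match P X with Finite _ => v = e | p_infty => v <= e | m_infty => e <= v end.

Definition vmix {A} (t : R) (k1 k2 : A -> R) : A -> R := fun a => (1 - t) * k1 a + t * k2 a.

Lemma quadratic_slope_nonneg (a b : R) :
  0 <= b -> (forall t, 0 < t <= 1 -> 0 <= 2 * t * a + t * t * b) -> 0 <= a.
Proof.
intros Hb H. apply Rnot_lt_le. intros Ha.
set (t := Rmin 1 (- a / (b + 1))).
assert (Ht1 : t <= 1) by apply Rmin_l.
assert (Ht0 : 0 < t) by (apply Rmin_glb_lt; [lra|apply Rdiv_lt_0_compat; lra]).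
assert (Htb : t * (b + 1) <= - a).
{ assert (Hta : t <= - a / (b + 1)) by apply Rmin_r.
  apply (Rmult_le_compat_r (b + 1)) in Hta; [|lra].
  unfold Rdiv in Hta. rewrite Rmult_assoc, Rinv_l in Hta by lra. lra. }
specialize (H t (conj Ht0 Ht1)). nra.
Qed.

Section Separation.

Context {Omega : Type} (w0 : Omega) (P : (Omega -> R) -> Rbar).
Variables (G : list (Omega -> R)) (p : (Omega -> R) -> R).

Definition reachable (k : (Omega -> R) -> R) : Prop :=
  exists mu, is_prob mu /\ forall X, In X G -> compatible P X (k X) (expect mu X).

Definition dist2 (k : (Omega -> R) -> R) : R := lsum G (fun X => Rsqr (k X - p X)).

Lemma reachable_eval w : reachable (fun X => X w).
Proof.
exists (dirac w). split; [apply is_prob_dirac|].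
intros X _. rewrite expect_dirac. unfold compatible. destruct (P X); lra.
Qed.

Lemma reachable_vmix t k1 k2 :
  0 <= t <= 1 -> reachable k1 -> reachable k2 -> reachable (vmix t k1 k2).
Proof.
intros Ht [mu1 [Hmu1 H1]] [mu2 [Hmu2 H2]].
exists (mix t mu1 mu2). split; [apply is_prob_mix; assumption|].
intros X HX. rewrite expect_mix. specialize (H1 X HX). specialize (H2 X HX).
unfold compatible, vmix in *. destruct (P X); [rewrite H1, H2; reflexivity|nra|nra].
Qed.

Lemma filterlim_dist2 {T} (F : (T -> Prop) -> Prop) {FF : Filter F}
    (f : T -> (Omega -> R) -> R) (k : (Omega -> R) -> R) :
  (forall X, In X G -> filterlim (fun i => f i X) F (Rbar_locally (k X))) ->
  filterlim (fun i => dist2 (f i)) F (Rbar_locally (dist2 k)).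
Proof.
intros H. unfold dist2. apply (filterlim_lsum F). intros X HX.
assert (HXp : filterlim (fun i => f i X - p X) F (Rbar_locally (k X - p X))).
{ apply (filterlim_Rbar_plus_fun F _ _ (k X) (- p X));
    [apply H, HX|apply filterlim_const|reflexivity]. }
exact (filterlim_Rbar_mult_fun F _ _ _ _ HXp HXp).
Qed.

(* The nearest point of the closure of the reachable set, obtained as an
   ultralimit of an almost minimizing family. *)
Lemma nearest_point (eps : R) : (forall k, reachable k -> eps <= dist2 k) ->
  exists ks, eps <= dist2 ks /\
    forall k t, reachable k -> 0 <= t <= 1 -> dist2 ks <= dist2 (vmix t ks k).
Proof.
intros Heps.
destruct (almost_minimizing_ultrafilter reachable dist2 (Rmax 0 eps))
  as [d [V [Hd [Hlow [FV [UV Hev]]]]]].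
{ exists (fun X => X w0). apply reachable_eval. }
{ intros k Hk. apply Rmax_lub; [apply lsum_nonneg; intros; apply Rle_0_sqr|auto]. }
assert (Hd0 := Rmax_l 0 eps). assert (Hde := Rmax_r 0 eps).
set (ks := fun X => real (ulim V (fun k => k X))).
assert (Hks : forall X, In X G -> filterlim (fun k => k X) V (Rbar_locally (ks X))).
{ intros X HX. apply (filterlim_ulim_bounded V FV UV _ (p X - (d + 2)) (p X + (d + 2))).
  eapply filter_imp; [|exact (Hev 1 Rlt_0_1)]. intros k [_ Hk].
  assert (Hsq : Rsqr (k X - p X) <= dist2 k).
  { apply (lsum_term_le G (fun X => Rsqr (k X - p X))); [exact HX|intros; apply Rle_0_sqr]. }
  unfold Rsqr in Hsq. split; nra. }
assert (Hmin : forall k t, reachable k -> 0 <= t <= 1 -> d <= dist2 (vmix t ks k)).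
{ intros k t Hk Ht.
  assert (Hlim : filterlim (fun k' => dist2 (vmix t k' k)) V (Rbar_locally (dist2 (vmix t ks k)))).
  { apply (filterlim_dist2 V). intros X HX.
    apply (filterlim_Rbar_plus_fun V _ _ (Rbar_mult (1 - t) (ks X)) (t * k X));
      [apply (filterlim_Rbar_scal_fun V), Hks, HX|apply filterlim_const|reflexivity]. }
  change (Rbar_le d (dist2 (vmix t ks k))).
  apply (filterlim_le (F := V) (fun _ => d) (fun k' => dist2 (vmix t k' k)) d _);
    [|apply filterlim_const|exact Hlim].
  eapply filter_imp; [|exact (Hev 1 Rlt_0_1)]. intros k' [Hk' _].
  apply Hlow, reachable_vmix; assumption. }
assert (Hds : dist2 ks <= d).
{ apply Rle_plus_epsilon. intros δ Hδ.
  change (Rbar_le (dist2 ks) (d + δ)).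
  apply (filterlim_le (F := V) dist2 (fun _ => d + δ) _ (d + δ));
    [|apply (filterlim_dist2 V); exact Hks|apply filterlim_const].
  eapply filter_imp; [|exact (Hev δ Hδ)]. intros k [_ Hk]. lra. }
exists ks. split.
- assert (H0 := Hmin _ 0 (reachable_eval w0) (conj (Rle_refl 0) Rle_0_1)).
  replace (dist2 (vmix 0 ks (fun X => X w0))) with (dist2 ks) in H0
    by (apply lsum_ext; intros; unfold vmix; f_equal; ring).
  lra.
- intros k t Hk Ht. specialize (Hmin k t Hk Ht). lra.
Qed.

Lemma nearest_point_gap (ks : (Omega -> R) -> R) :
  (forall k t, reachable k -> 0 <= t <= 1 -> dist2 ks <= dist2 (vmix t ks k)) ->
  forall k, reachable k -> lsum G (fun X => (p X - ks X) * (k X - p X)) <= - dist2 ks.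
Proof.
intros Hks k Hk.
set (slope := lsum G (fun X => (ks X - p X) * (k X - ks X))).
assert (Hslope : 0 <= slope).
{ apply (quadratic_slope_nonneg _ (lsum G (fun X => Rsqr (k X - ks X)))).
  - apply lsum_nonneg. intros; apply Rle_0_sqr.
  - intros t Ht. specialize (Hks k t Hk (conj (Rlt_le _ _ (proj1 Ht)) (proj2 Ht))).
    unfold dist2, vmix in Hks.
    rewrite (lsum_ext G (fun X => Rsqr ((1 - t) * ks X + t * k X - p X))
               (fun X => Rsqr (ks X - p X) + ((2 * t) * ((ks X - p X) * (k X - ks X))
                                       + (t * t) * Rsqr (k X - ks X)))) in Hks
      by (intros; unfold Rsqr; ring).
    rewrite !lsum_plus, !lsum_scal in Hks. unfold dist2, slope. lra. }
rewrite (lsum_ext G _ (fun X => (-1) * ((ks X - p X) * (k X - ks X)) + (-1) * Rsqr (ks X - p X)))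
  by (intros; unfold Rsqr; ring).
rewrite lsum_plus, !lsum_scal. unfold dist2. fold slope. lra.
Qed.

Lemma supporting_sign (a : (Omega -> R) -> R) : NoDup G ->
  (forall k, reachable k -> lsum G (fun X => a X * (k X - p X)) <= 0) ->
  forall X0 s, In X0 G ->
  (forall l, 0 <= l -> compatible P X0 (X0 w0 + s * l) (X0 w0)) -> s * a X0 <= 0.
Proof.
intros HG Hgap X0 s HX0 Hdir. apply Rnot_lt_le. intros Hpos.
set (C := lsum G (fun X => a X * (X w0 - p X))).
set (l := (Rabs C + 1) / (s * a X0)).
assert (Hl : 0 <= l) by (apply Rlt_le, Rdiv_lt_0_compat; [pose proof (Rabs_pos C)|]; lra).
set (k := fun X => X w0 + (if excluded_middle_informative (X = X0) then s * l else 0)).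
assert (Hk : reachable k).
{ exists (dirac w0). split; [apply is_prob_dirac|]. intros X HX.
  rewrite expect_dirac. unfold k. destruct (excluded_middle_informative (X = X0)) as [->|].
  - apply Hdir, Hl.
  - rewrite Rplus_0_r. unfold compatible. destruct (P X); lra. }
assert (Hsum := Hgap k Hk).
rewrite (lsum_ext G _ (fun X => a X * (X w0 - p X)
          + (s * l) * (if excluded_middle_informative (X = X0) then a X else 0))) in Hsum
  by (intros X _; unfold k; destruct (excluded_middle_informative (X = X0)); ring).
rewrite lsum_plus, lsum_scal, lsum_delta in Hsum by assumption. fold C in Hsum.
assert (Hsl : s * l * a X0 = Rabs C + 1).
{ unfold l. field. split; intros H0; rewrite H0 in Hpos; lra. }
pose proof (Rle_abs (- C)). rewrite Rabs_Ropp in *. lra.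
Qed.

Lemma separating_bet (eps : R) : NoDup G -> 0 < eps ->
  (forall k, reachable k -> eps <= dist2 k) ->
  exists a : (Omega -> R) -> R,
    (forall X, In X G -> P X = p_infty -> 0 <= a X) /\
    (forall X, In X G -> P X = m_infty -> a X <= 0) /\
    forall w, lsum G (fun X => a X * (X w - p X)) <= - eps.
Proof.
intros HG Heps Hfar. destruct (nearest_point eps Hfar) as [ks [Hks Hnear]].
assert (Hgap := nearest_point_gap ks Hnear).
assert (Hsign : forall X0 s, In X0 G ->
  (forall l, 0 <= l -> compatible P X0 (X0 w0 + s * l) (X0 w0)) -> s * (p X0 - ks X0) <= 0).
{ apply supporting_sign; [exact HG|]. intros k Hk. specialize (Hgap k Hk). lra. }
exists (fun X => p X - ks X). split; [|split].
- intros X HX HPX. enough (-1 * (p X - ks X) <= 0) by lra.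
  apply Hsign; [exact HX|]. intros l Hl. unfold compatible. rewrite HPX. lra.
- intros X HX HPX. enough (1 * (p X - ks X) <= 0) by lra.
  apply Hsign; [exact HX|]. intros l Hl. unfold compatible. rewrite HPX. lra.
- intros w. specialize (Hgap _ (reachable_eval w)). lra.
Qed.

End Separation.

Lemma supf_le {Omega} (f : Omega -> R) (c : R) : (forall w, f w <= c) -> Rbar_le (supf f) c.
Proof.
intros H. destruct (Lub_Rbar_correct (fun y => exists w, y = f w)) as [_ lub].
apply lub. intros y [w ->]. apply H.
Qed.

Lemma supf_ge0 {Omega} (f : Omega -> R) :
  (forall eta, 0 < eta -> exists w, - eta <= f w) -> Rbar_le 0 (supf f).
Proof.
intros H. destruct (Lub_Rbar_correct (fun y => exists w, y = f w)) as [ub _].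
unfold supf. destruct (Lub_Rbar (fun y => exists w, y = f w)) as [r| |]; simpl; [|exact I|].
- apply Rle_plus_epsilon. intros eta Heta. destruct (H eta Heta) as [w Hw].
  specialize (ub (f w) (ex_intro _ w eq_refl)). simpl in ub. lra.
- destruct (H 1 Rlt_0_1) as [w _]. exact (ub (f w) (ex_intro _ w eq_refl)).
Qed.

Lemma gain_marginal_bet {Omega} (G : list (Omega -> R)) (a p : (Omega -> R) -> R) w :
  gain (fun X => X) (fun _ => fullset) (map (fun X => (X, a X, p X)) G) w
  = lsum G (fun X => a X * (X w - p X)).
Proof. induction G as [|X G IH]; simpl; [reflexivity|rewrite IH, indic_fullset; ring]. Qed.

Definition close {Omega} (P : (Omega -> R) -> Rbar) (X : Omega -> R) (δ : R)
    (mu : list (R * Omega)) : Prop :=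
  match P X with
  | Finite r => Rabs (expect mu X - r) <= δ
  | p_infty => / δ <= expect mu X
  | m_infty => expect mu X <= - / δ
  end.

Lemma filterlim_close {Omega} (F : (list (R * Omega) -> Prop) -> Prop) {FF : Filter F}
    (P : (Omega -> R) -> Rbar) (X : Omega -> R) :
  (forall δ, 0 < δ -> F (close P X δ)) ->
  filterlim (fun mu => expect mu X) F (Rbar_locally (P X)).
Proof.
intros H Q HQ. unfold filtermap. unfold close in H. destruct (P X) as [r| |]; simpl in HQ.
- destruct HQ as [[eps Heps] HQ]. simpl in HQ.
  eapply filter_imp; [|exact (H (eps / 2) ltac:(lra))]. intros mu Hmu.
  apply HQ. change (Rabs (expect mu X - r) < eps). lra.
- destruct HQ as [M HM]. pose proof (Rle_abs M).
  assert (HM1 : 0 < / (Rabs M + 1)) by (apply Rinv_0_lt_compat; pose proof (Rabs_pos M); lra).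
  eapply filter_imp; [|exact (H _ HM1)].
  intros mu Hmu. apply HM. rewrite Rinv_inv in Hmu. lra.
- destruct HQ as [M HM]. pose proof (Rle_abs (- M)). rewrite Rabs_Ropp in *.
  assert (HM1 : 0 < / (Rabs M + 1)) by (apply Rinv_0_lt_compat; pose proof (Rabs_pos M); lra).
  eapply filter_imp; [|exact (H _ HM1)].
  intros mu Hmu. apply HM. rewrite Rinv_inv in Hmu. lra.
Qed.

Lemma close_weaken {Omega} P (X : Omega -> R) δ1 δ2 mu :
  0 < δ1 <= δ2 -> close P X δ1 mu -> close P X δ2 mu.
Proof.
intros Hδ. assert (/ δ2 <= / δ1) by (apply Rinv_le_contravar; lra).
unfold close. destruct (P X); lra.
Qed.

Section MarginalApproximation.

Context {Omega : Type} (w0 : Omega) (D : (Omega -> R) -> Prop) (P : (Omega -> R) -> Rbar).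
Hypothesis HP : coherent1 D (fun X => X) (fun _ => fullset) P.

Lemma reachable_near (G : list (Omega -> R)) (p : (Omega -> R) -> R) :
  NoDup G -> (forall X, In X G -> D X) -> (forall X r, P X = Finite r -> p X = r) ->
  forall eps, 0 < eps -> exists k, reachable P G k /\ dist2 G p k < eps.
Proof.
intros HG HGD Hp eps Heps. apply NNPP. intros Hno.
assert (Hfar : forall k, reachable P G k -> eps <= dist2 G p k).
{ intros k Hk. apply Rnot_lt_le. intros Hlt. apply Hno. eauto. }
destruct (separating_bet w0 P G p eps HG Heps Hfar) as [a [Hpinf [Hminf Hloss]]].
set (s := map (fun X => (X, a X, p X)) G).
assert (Hadm : admissible D P s).
{ split.
  - unfold s. rewrite map_map, map_id. exact HG.
  - apply Forall_forall. intros t Ht. unfold s in Ht. apply in_map_iff in Ht.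
    destruct Ht as [X [<- HX]]. simpl. split; [auto|split; [auto|split; [auto|]]].
    intros r HPr. apply Hp, HPr. }
assert (Hsup := proj2 HP s Hadm).
assert (Hle : Rbar_le (supf (gain (fun X => X) (fun _ => fullset) s)) (- eps)).
{ apply supf_le. intros w. unfold s. rewrite gain_marginal_bet. apply Hloss. }
destruct (supf (gain (fun X => X) (fun _ => fullset) s)); simpl in *; lra.
Qed.

Lemma close_simultaneous (F : list (Omega -> R)) (δ : R) : 0 < δ ->
  exists mu, is_prob mu /\ forall X, In X F -> D X -> close P X δ mu.
Proof.
intros Hδ.
set (G := nodup (fun X Y : Omega -> R => excluded_middle_informative (X = Y))
            (filter (fun X => if excluded_middle_informative (D X) then true else false) F)).
assert (HG : NoDup G) by apply NoDup_nodup.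
assert (HGD : forall X, In X G <-> In X F /\ D X).
{ intros X. unfold G. rewrite nodup_In, filter_In.
  destruct (excluded_middle_informative (D X)); intuition discriminate. }
set (p := fun X =>
  match P X with Finite r => r | p_infty => / δ + 1 | m_infty => - (/ δ + 1) end).
set (e := Rmin δ 1).
assert (He : 0 < e) by (apply Rmin_glb_lt; lra).
assert (Hp : forall X r, P X = Finite r -> p X = r)
  by (intros X r HPr; unfold p; rewrite HPr; reflexivity).
destruct (reachable_near G p HG (fun X HX => proj2 (proj1 (HGD X) HX)) Hp (Rsqr e))
  as [k [[mu [Hmu Hk]] Hdist]]; [apply Rsqr_pos_lt; lra|].
exists mu. split; [exact Hmu|]. intros X HX HDX.
assert (HXG : In X G) by (apply HGD; auto).
assert (Hsq : Rsqr (k X - p X) < Rsqr e).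
{ eapply Rle_lt_trans; [|exact Hdist].
  apply (lsum_term_le G (fun X => Rsqr (k X - p X))); [exact HXG|intros; apply Rle_0_sqr]. }
apply Rsqr_lt_abs_0 in Hsq. rewrite (Rabs_right e) in Hsq by lra.
apply Rabs_def2 in Hsq. specialize (Hk X HXG).
assert (e <= δ) by apply Rmin_l. assert (e <= 1) by apply Rmin_r.
unfold close, compatible, p in *. destruct (P X).
- apply Rabs_le. lra.
- lra.
- lra.
Qed.

End MarginalApproximation.

Definition approximating {Omega} (D : (Omega -> R) -> Prop) (P : (Omega -> R) -> Rbar)
    (S : list (R * Omega) -> Prop) : Prop :=
  exists F δ, 0 < δ /\
    forall mu, is_prob mu -> (forall X, In X F -> D X -> close P X δ mu) -> S mu.

Lemma approximating_filter {Omega} D (P : (Omega -> R) -> Rbar) : Filter (approximating D P).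
Proof.
constructor.
- exists nil, 1. split; [lra|auto].
- intros A B [F1 [δ1 [H1 HA]]] [F2 [δ2 [H2 HB]]].
  exists (F1 ++ F2), (Rmin δ1 δ2). split; [apply Rmin_glb_lt; assumption|].
  assert (Hmin : 0 < Rmin δ1 δ2) by (apply Rmin_glb_lt; assumption).
  intros mu Hmu Hclose. split; [apply HA|apply HB]; try assumption; intros X HX HDX.
  + apply (close_weaken _ _ (Rmin δ1 δ2)); [split; [exact Hmin|apply Rmin_l]|].
    apply Hclose; [apply in_or_app; left|]; assumption.
  + apply (close_weaken _ _ (Rmin δ1 δ2)); [split; [exact Hmin|apply Rmin_r]|].
    apply Hclose; [apply in_or_app; right|]; assumption.
- intros A B HAB [F [δ [Hδ HA]]]. exists F, δ. split; [assumption|]. auto.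
Qed.

Lemma approximating_ultrafilter {Omega} (w0 : Omega) D P :
  coherent1 D (fun X => X) (fun _ => fullset) P ->
  exists U : (list (R * Omega) -> Prop) -> Prop,
    ProperFilter U /\ ultra U /\ U is_prob /\
    forall X δ, D X -> 0 < δ -> U (close P X δ).
Proof.
intros HP.
assert (Hproper : ~ approximating D P (fun _ => False)).
{ intros [F [δ [Hδ H]]]. destruct (close_simultaneous w0 D P HP F δ Hδ) as [mu [Hmu Hc]].
  exact (H mu Hmu Hc). }
destruct (ultrafilter_extension _ (approximating_filter D P) Hproper) as [U [HU [FU UU]]].
exists U. split; [exact FU|split; [exact UU|split]].
- apply HU. exists nil, 1. split; [lra|auto].
- intros X δ HDX Hδ. apply HU. exists (X :: nil), δ. split; [exact Hδ|].
  intros mu _ Hc. apply Hc; [left; reflexivity|exact HDX].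
Qed.

(* Elementary conditional expectation given B; on a null event it evaluates X at
   a chosen point of B, which keeps [X * indic B] and [X] equivalent given B. *)
Definition cexpect {Omega} (w0 : Omega) (mu : list (R * Omega))
    (X : Omega -> R) (B : Omega -> Prop) : R :=
  if Rlt_dec 0 (expect mu (indic B))
  then expect mu (fun w => X w * indic B w) / expect mu (indic B)
  else X (epsilon (inhabits w0) B).

Section ConditionalExpectation.

Context {Omega : Type} (w0 : Omega) (mu : list (R * Omega)).
Hypothesis Hmu : is_prob mu.

Lemma cexpect_fair_bet (X : Omega -> R) B a :
  expect mu (fun w => a * indic B w * (X w - cexpect w0 mu X B)) = 0.
Proof.
destruct Hmu as [Hw _].
rewrite (expect_ext mu _
           (fun w => a * (X w * indic B w) + (- (a * cexpect w0 mu X B)) * indic B w))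
  by (intros; ring).
rewrite expect_lin. unfold cexpect. destruct (Rlt_dec 0 (expect mu (indic B))) as [HB|HB].
- field. lra.
- assert (HB0 : expect mu (indic B) = 0).
  { apply Rle_antisym; [lra|]. apply expect_nonneg; [exact Hw|apply indic_nonneg]. }
  rewrite HB0, (expect_null_event mu B X Hw HB0). ring.
Qed.

Lemma cexpect_lin (X Y : Omega -> R) B a b :
  cexpect w0 mu (fun w => a * X w + b * Y w) B = a * cexpect w0 mu X B + b * cexpect w0 mu Y B.
Proof.
unfold cexpect. destruct (Rlt_dec 0 (expect mu (indic B))) as [HB|HB]; [|reflexivity].
rewrite (expect_ext mu _ (fun w => a * (X w * indic B w) + b * (Y w * indic B w)))
  by (intros; ring).
rewrite expect_lin. field. lra.
Qed.

Lemma cexpect_one B : cexpect w0 mu (fun _ => 1) B = 1.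
Proof.
unfold cexpect. destruct (Rlt_dec 0 (expect mu (indic B))) as [HB|HB]; [|reflexivity].
rewrite (expect_ext mu _ (indic B)) by (intros; ring). field. lra.
Qed.

Lemma cexpect_le (X Y : Omega -> R) B :
  (forall w, X w <= Y w) -> cexpect w0 mu X B <= cexpect w0 mu Y B.
Proof.
intros HXY. unfold cexpect. destruct (Rlt_dec 0 (expect mu (indic B))) as [HB|HB]; [|apply HXY].
apply Rmult_le_compat_r; [apply Rlt_le, Rinv_0_lt_compat, HB|].
apply expect_le; [apply Hmu|]. intros w. apply Rmult_le_compat_r; [apply indic_nonneg|apply HXY].
Qed.

Lemma cexpect_indic (X : Omega -> R) B : nonempty B ->
  cexpect w0 mu (fun w => X w * indic B w) B = cexpect w0 mu X B.
Proof.
intros HB. unfold cexpect. destruct (Rlt_dec 0 (expect mu (indic B))).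
- f_equal. apply expect_ext. intros w. destruct (indic_01 B w) as [-> | ->]; ring.
- rewrite indic_in; [ring|]. apply epsilon_spec, HB.
Qed.

Lemma cexpect_fullset (X : Omega -> R) : cexpect w0 mu X fullset = expect mu X.
Proof.
destruct Hmu as [_ H1]. unfold cexpect.
rewrite (expect_ext mu (indic fullset) (fun _ => 1)) by apply indic_fullset. rewrite H1.
destruct (Rlt_dec 0 1) as [_|]; [|lra].
rewrite (expect_ext mu _ X) by (intros; rewrite indic_fullset; ring). field.
Qed.

End ConditionalExpectation.

Lemma gain_lsum {Omega I} (X : I -> Omega -> R) (B : I -> Omega -> Prop) (s : list (I * R * R)) w :
  gain X B s w
  = lsum s (fun t => snd (fst t) * indic (B (fst (fst t))) w * (X (fst (fst t)) w - snd t)).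
Proof. induction s as [|[[i a] c] s IH]; simpl; [reflexivity|rewrite IH; reflexivity]. Qed.

Lemma filterlim_bet_loss {T} (F : (T -> Prop) -> Prop) {FF : Filter F}
    (x : T -> R) (L : Rbar) (a c δ : R) :
  filterlim x F (Rbar_locally L) -> 0 < δ ->
  (L = p_infty -> 0 <= a) -> (L = m_infty -> a <= 0) -> (forall r, L = Finite r -> c = r) ->
  F (fun i => - δ <= a * (x i - c)).
Proof.
intros Hx Hδ Hpinf Hminf Hfin. destruct L as [r| |].
- rewrite (Hfin r eq_refl). pose proof (Rabs_pos a) as Ha.
  set (e := δ / (Rabs a + 1)).
  assert (He : 0 < e) by (apply Rdiv_lt_0_compat; lra).
  assert (Hea : Rabs a * e + e = δ) by (unfold e; field; lra).
  eapply filter_imp; [|apply Hx; exists (mkposreal _ He); intros y Hy; exact Hy].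
  intros i Hi. change (Rabs (x i - r) < e) in Hi.
  assert (Hprod : Rabs (a * (x i - r)) < δ).
  { rewrite Rabs_mult.
    assert (Rabs a * Rabs (x i - r) <= Rabs a * e) by (apply Rmult_le_compat_l; lra). lra. }
  pose proof (Rle_abs (- (a * (x i - r)))). rewrite Rabs_Ropp in *. lra.
- specialize (Hpinf eq_refl).
  eapply filter_imp; [|apply Hx; exists c; intros y Hy; exact Hy].
  intros i Hi. assert (0 <= a * (x i - c)) by (apply Rmult_le_pos; lra). lra.
- specialize (Hminf eq_refl).
  eapply filter_imp; [|apply Hx; exists c; intros y Hy; exact Hy].
  intros i Hi. assert (0 <= a * (x i - c)) by nra. lra.
Qed.

Lemma cexpect_gain_bound {Omega} (w0 : Omega) (mu : list (R * Omega))
    (s : list ((Omega -> R) * (Omega -> Prop) * R * R)) (δ : R) :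
  is_prob mu -> 0 <= δ ->
  (forall t, In t s ->
     - δ <= snd (fst t) * (cexpect w0 mu (fst (fst (fst t))) (snd (fst (fst t))) - snd t)) ->
  exists w, - (δ * INR (length s)) <= gain fst snd s w.
Proof.
intros Hmu Hδ Hs.
set (bet := fun t : (Omega -> R) * (Omega -> Prop) * R * R => fun w =>
  snd (fst t) * indic (snd (fst (fst t))) w
    * (fst (fst (fst t)) w - cexpect w0 mu (fst (fst (fst t))) (snd (fst (fst t))))).
assert (Hfair : expect mu (fun w => lsum s (fun t => bet t w)) = 0).
{ rewrite expect_lsum, (lsum_ext s _ (fun _ => 0)), lsum_const; [ring|].
  intros t _. apply cexpect_fair_bet, Hmu. }
destruct (expect_nonneg_witness mu _ Hmu (Req_le _ _ (eq_sym Hfair))) as [w Hw].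
exists w. rewrite gain_lsum. eapply Rle_trans; [|apply (lsum_le s (fun t => bet t w + - δ))].
- rewrite lsum_plus, lsum_const. lra.
- intros [[[X B] a] c] Ht. specialize (Hs _ Ht). unfold bet. simpl in *.
  destruct (indic_01 B w) as [-> | ->]; lra.
Qed.

Section UltraPrevision.

Context {Omega : Type} (w0 : Omega) (U : (list (R * Omega) -> Prop) -> Prop).
Hypothesis FU : ProperFilter U.
Hypothesis UU : ultra U.
Hypothesis Uprob : U is_prob.

Definition ulim_cexpect (X : Omega -> R) (B : Omega -> Prop) : Rbar :=
  ulim U (fun mu => cexpect w0 mu X B).

Lemma ulim_cexpect_coherent (idx : (Omega -> R) * (Omega -> Prop) -> Prop) :
  (forall i, idx i -> nonempty (snd i)) ->
  coherent1 idx fst snd (fun i => ulim_cexpect (fst i) (snd i)).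
Proof.
intros Hne. split; [exact Hne|]. intros s [_ Hadm]. apply supf_ge0. intros eta Heta.
pose proof (pos_INR (length s)) as Hlen.
set (δ := eta / (INR (length s) + 1)).
assert (Hδ : δ * (INR (length s) + 1) = eta) by (unfold δ; field; lra).
assert (Hδpos : 0 < δ) by (apply Rdiv_lt_0_compat; lra).
assert (Hev : U (fun mu => forall t, In t s ->
  - δ <= snd (fst t) * (cexpect w0 mu (fst (fst (fst t))) (snd (fst (fst t))) - snd t))).
{ apply (filter_forall_list U). intros [[[X B] a] c] Ht. rewrite Forall_forall in Hadm.
  destruct (Hadm _ Ht) as [_ [Hpinf [Hminf Hfin]]]. simpl in *.
  exact (filterlim_bet_loss U _ _ a c δ (filterlim_ulim U FU UU _) Hδpos Hpinf Hminf Hfin). }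
destruct (filter_ex _ (filter_and _ _ Uprob Hev)) as [mu [Hmu Hbound]].
destruct (cexpect_gain_bound w0 mu s δ Hmu (Rlt_le _ _ Hδpos) Hbound) as [w Hw].
exists w. nra.
Qed.

Lemma ulim_cexpect_marginal (D : (Omega -> R) -> Prop) (P : (Omega -> R) -> Rbar) :
  (forall X δ, D X -> 0 < δ -> U (close P X δ)) -> forall X, D X -> ulim_cexpect X fullset = P X.
Proof.
intros Uclose X HX. unfold ulim_cexpect.
rewrite (ulim_eq U FU UU _ (fun mu => expect mu X)).
- apply (ulim_unique U FU UU), (filterlim_close U). intros δ Hδ. apply Uclose; assumption.
- eapply filter_imp; [|exact Uprob]. intros mu Hmu. apply cexpect_fullset, Hmu.
Qed.

Lemma ulim_cexpect_fa_expectation (L : (Omega -> R) -> Prop) (B : Omega -> Prop) :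
  fa_expectation L (fun X => ulim_cexpect X B).
Proof.
split; [|split].
- intros X Y _ _ HXY. apply (ulim_le U FU UU).
  eapply filter_imp; [|exact Uprob]. intros mu Hmu. apply cexpect_le; assumption.
- intros X Y a b z _ _ Hz. apply (ulim_unique U FU UU).
  eapply filterlim_ext; [intros mu; symmetry; apply cexpect_lin|].
  apply (filterlim_Rbar_plus_fun U _ _ _ _ _
           (filterlim_Rbar_scal_fun U _ a _ (filterlim_ulim U FU UU _))
           (filterlim_Rbar_scal_fun U _ b _ (filterlim_ulim U FU UU _)) Hz).
- unfold ulim_cexpect.
  rewrite (ulim_eq U FU UU _ (fun _ => 1)), (ulim_const U FU UU); [reflexivity|].
  apply filter_forall. intros mu. apply cexpect_one.
Qed.

Lemma ulim_cexpect_indic (X : Omega -> R) (B : Omega -> Prop) : nonempty B ->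
  ulim_cexpect (fun w => X w * indic B w) B = ulim_cexpect X B.
Proof.
intros HB. apply (ulim_eq U FU UU). apply filter_forall. intros mu. apply cexpect_indic, HB.
Qed.

End UltraPrevision.

Theorem lemma7p2 (Omega : Type) (HOmega : inhabited Omega)
  (D : (Omega -> R) -> Prop) (HD : forall c : R, D (fun _ => c))
  (P : (Omega -> R) -> Rbar)
  (HP : coherent1 D (fun X : Omega -> R => X) (fun _ => fullset) P) :
  exists Pc : (Omega -> R) -> (Omega -> Prop) -> Rbar,
    coherent1 (fun i : (Omega -> R) * (Omega -> Prop) =>
                 spanL D (fst i) /\ nonempty (snd i))
              fst snd (fun i => Pc (fst i) (snd i)) /\
    (forall X, D X -> Pc X fullset = P X) /\
    (forall B, nonempty B ->
       fa_expectation (spanL D) (fun X => Pc X B) /\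
       (forall X, spanL D X -> Pc (fun w => X w * indic B w) B = Pc X B)).
Proof.
destruct HOmega as [w0].
destruct (approximating_ultrafilter w0 D P HP) as [U [FU [UU [Uprob Uclose]]]].
exists (ulim_cexpect w0 U). split; [|split].
- apply ulim_cexpect_coherent; [assumption..|]. intros i [_ Hi]. exact Hi.
- apply ulim_cexpect_marginal; assumption.
- intros B HB. split.
  + apply ulim_cexpect_fa_expectation; assumption.
  + intros X _. apply ulim_cexpect_indic; assumption.
Qed.
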